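(* Let $G=(V,E)$ be a finite, simple, connected graph which is effective Bonnet Myers sharp with curvature $K$, i.e. $K=\min_{u\sim v}\kappa(u,v)>0$ and $\operatorname{diam}_{\operatorname{eff}}(G)=\frac{\max_v\operatorname{Deg}(v)}{K}$. Let $x\sim y$. Then every $x'\in V_x^y$ has exactly one neighbor in $V_y^x$, and exactly $K-2$ neighbors of $x'$ lie in $V^{xy}$.
   Context: $d$ is the combinatorial distance, $\operatorname{Deg}$ the degree, $\operatorname{diam}_{\operatorname{eff}}(G)=\frac{1}{|V|^2}\sum_{x,y}d(x,y)$. Laplacian $\Delta f(x)=\sum_{y\sim x}(f(y)-f(x))$. Ollivier curvature of an edge: $\kappa(x,y)=\inf\{\Delta f(x)-\Delta f(y): f(y)-f(x)=1,\ \max_{u\sim v}|f(u)-f(v)|=1\}$. For adjacent $x\sim y$: $V_x^y=\{v: d(v,x)<d(v,y)\}$, $V_y^x=\{v:d(v,y)<d(v,x)\}$, $V^{xy}=\{v:d(v,x)=d(v,y)\}$. *)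

From HB Require Import structures.
From mathcomp Require Import all_boot all_order all_algebra.
From mathcomp Require Import boolp classical_sets reals.
Set Implicit Arguments. Unset Strict Implicit. Unset Printing Implicit Defensive.
Import Order.TTheory GRing.Theory Num.Theory.
Local Open Scope ring_scope.
Local Open Scope classical_set_scope.

Definition simple_graph (T : finType) (adj : rel T) : Prop :=
  symmetric adj /\ irreflexive adj.

Definition connected_graph (T : finType) (adj : rel T) : Prop :=
  forall x y : T, connect adj x y.

Fixpoint reach (T : finType) (adj : rel T) (k : nat) (x : T) : {set T} :=
  match k with
  | 0 => [set x]
  | k'.+1 => reach adj k' x :|: [set v | [exists u in reach adj k' x, adj u v]]
  end.

(* combinatorial distance: least k with y within k steps of x
   (for connected graphs it is < #|T|) *)
Definition dist (T : finType) (adj : rel T) (x y : T) : nat :=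
  find (fun k => y \in reach adj k x) (iota 0 #|T|).

Definition deg (T : finType) (adj : rel T) (x : T) : nat :=
  #|[set v | adj x v]|.

Definition max_deg (T : finType) (adj : rel T) : nat :=
  \max_(v : T) deg adj v.

Definition diam_eff (R : realType) (T : finType) (adj : rel T) : R :=
  (\sum_(x : T) \sum_(y : T) (dist adj x y)%:R) / (#|T| ^ 2)%:R.

Definition laplacian (R : realType) (T : finType) (adj : rel T)
  (f : T -> R) (x : T) : R :=
  \sum_(v : T | adj x v) (f v - f x).

Definition lip_one (R : realType) (T : finType) (adj : rel T) (f : T -> R) : Prop :=
  (forall u v, adj u v -> `|f u - f v| <= 1) /\
  (exists u v, adj u v /\ `|f u - f v| = 1).

(* Ollivier curvature (Laplacian / Lipschitz formulation) *)
Definition ollivier (R : realType) (T : finType) (adj : rel T) (x y : T) : R :=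
  inf [set (laplacian adj f x - laplacian adj f y) |
        f in [set f : T -> R | f y - f x = 1 /\ lip_one adj f]].

(* Curvature at least K on every edge gives, by induction along geodesics,
   Δ d(., z) (w) <= deg z - K d(w, z).  Summing over all z and w kills the
   Laplacians, and what remains, N^2 maxdeg - K Σ d, vanishes exactly when the
   effective diameter equals maxdeg / K; so sharpness forces
   Δ d(., z) (w) = maxdeg - K d(w, z) everywhere.  For x ~ y and w in V_x^y,
   expanding Δ(d_x - d_y)(w) = K gives 2 #(N(w) ∩ V_y^x) + #(N(w) ∩ V^xy) = K.
   Testing the curvature bound on an edge u ~ w of V_x^y leading away from x
   with min(d_x, d_y) and with max(d_x, d_y) shows that #(N(w) ∩ V_y^x) does not
   change along the edge; it is 1 at x, hence 1 on all of V_x^y. *)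

From HB Require Import structures.
From mathcomp Require Import all_boot all_order all_algebra.
From mathcomp Require Import boolp classical_sets reals.
From mathcomp Require Import zify ring lra.
Import Order.TTheory GRing.Theory Num.Theory.
Set Implicit Arguments. Unset Strict Implicit.
Local Open Scope ring_scope.

Section Graph.
Variables (T : finType) (adj : rel T).

Lemma reach_le k m x : (k <= m)%N -> {subset reach adj k x <= reach adj m x}.
Proof.
move=> /subnK <-; elim: (m - k)%N => [|i IH] //= v /IH.
by rewrite /= inE => ->.
Qed.

Lemma reachS k x v :
  (v \in reach adj k.+1 x) = (v \in reach adj k x) || [exists u in reach adj k x, adj u v].
Proof. by rewrite /= !inE. Qed.

Lemma reach_adj k x u v : u \in reach adj k x -> adj u v -> v \in reach adj k.+1 x.
Proof. by move=> Hu Huv; rewrite reachS; apply/orP; right; apply/existsP; exists u; rewrite Hu. Qed.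

Lemma reach_cons k x u v : adj x u -> v \in reach adj k u -> v \in reach adj k.+1 x.
Proof.
move=> Hxu; elim: k v => [|k IH] v.
  by rewrite inE => /eqP ->; apply: (@reach_adj 0); rewrite ?inE.
rewrite reachS => /orP[/IH /(reach_le (leqnSn _)) -> //|/exists_inP[w /IH Hw Hwv]].
exact: reach_adj Hw Hwv.
Qed.

Lemma reach_last x p : path adj x p -> last x p \in reach adj (size p) x.
Proof.
elim: p x => [|a p IH] x /=; first by rewrite inE.
by case/andP=> Hxa /IH; apply: reach_cons Hxa.
Qed.

Hypothesis adj_sym : symmetric adj.

Lemma reach_sym k x y : y \in reach adj k x -> x \in reach adj k y.
Proof.
elim: k y => [|k IH] y; first by rewrite !inE => /eqP ->.
rewrite reachS => /orP[/IH /(reach_le (leqnSn _)) -> //|/exists_inP[u /IH Hu Huy]].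
by apply: reach_cons Hu; rewrite adj_sym.
Qed.

Hypothesis adj_conn : connected_graph adj.

Lemma reach_lt_card x y : exists2 k, (k < #|T|)%N & y \in reach adj k x.
Proof.
have /connectP[p Hp ->] := adj_conn x y; have [q Hq Hu _] := shortenP Hp.
exists (size q); last exact: reach_last Hq.
by have := max_card (mem (x :: q)); rewrite (card_uniqP Hu).
Qed.

Lemma mem_reach k x y : (y \in reach adj k x) = (dist adj x y <= k)%N.
Proof.
have [m Hm Hy] := reach_lt_card x y.
have Hhas : has (fun k => y \in reach adj k x) (iota 0 #|T|).
  by apply/hasP; exists m; rewrite ?mem_iota.
have Hlt : (dist adj x y < #|T|)%N by rewrite /dist -[X in (_ < X)%N](size_iota 0) -has_find.
case: leqP => Hk.
  by rewrite (reach_le Hk) //; have := nth_find 0%N Hhas; rewrite nth_iota ?add0n.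
by apply/negbTE; have := before_find 0%N Hk; rewrite nth_iota ?add0n ?(ltn_trans Hk Hlt) // => ->.
Qed.

Lemma dist_sym x y : dist adj x y = dist adj y x.
Proof.
by apply/eqP; rewrite eqn_leq -!mem_reach; apply/andP; split;
  apply: reach_sym; rewrite // mem_reach.
Qed.

Lemma dist_eq0 x y : (dist adj x y == 0%N) = (y == x).
Proof. by rewrite -leqn0 -mem_reach inE. Qed.

Lemma distxx x : dist adj x x = 0%N.
Proof. by apply/eqP; rewrite dist_eq0. Qed.

Lemma dist_le_adjr z u v : adj u v -> (dist adj z v <= (dist adj z u).+1)%N.
Proof. by move=> Huv; rewrite -mem_reach; apply: reach_adj Huv; rewrite mem_reach. Qed.

Lemma dist_le_adjl z u v : adj u v -> (dist adj u z <= (dist adj v z).+1)%N.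
Proof. by rewrite adj_sym (dist_sym u) (dist_sym v); apply: dist_le_adjr. Qed.

Lemma dist_succ_nbr z w k : dist adj w z = k.+1 -> exists2 u, adj w u & dist adj u z = k.
Proof.
rewrite dist_sym => Hd; have := leqnn (dist adj z w).
rewrite -mem_reach Hd reachS mem_reach Hd ltnn => /exists_inP[u Hu Huw].
exists u; first by rewrite adj_sym.
by rewrite mem_reach in Hu; rewrite dist_sym; have := dist_le_adjr z Huw; rewrite Hd; lia.
Qed.

Lemma dist_closer_succ x y v : adj x y -> (dist adj v x < dist adj v y)%N ->
  dist adj v y = (dist adj v x).+1.
Proof. by move=> Hxy; have := dist_le_adjr v Hxy; lia. Qed.

Hypothesis adj_irr : irreflexive adj.

Lemma dist_adj x y : adj x y -> dist adj x y = 1%N.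
Proof.
move=> Hxy; have := dist_le_adjr x Hxy; rewrite distxx.
have : y != x by apply: contraTneq Hxy => ->; rewrite adj_irr.
by rewrite -dist_eq0; lia.
Qed.

Lemma degE z : deg adj z = #|[set v | adj z v]|.
Proof. by apply: eq_card => v; rewrite inE; apply/idP/idP => [/set_mem|/mem_set]. Qed.

Definition nbrs_closer w a b := [set v | adj w v && (dist adj v a < dist adj v b)%N].
Definition nbrs_equidist w a b := [set v | adj w v && (dist adj v a == dist adj v b)].

Lemma nbrs_closer_adj x y : adj x y -> nbrs_closer x y x = [set y].
Proof.
move=> Hxy; apply/setP => v; rewrite !inE.
case: (boolP (adj x v)) => Hxv /=; last first.
  by apply/esym/negbTE; apply: contraNneq Hxv => ->.
by rewrite [dist adj v x]dist_sym (dist_adj Hxv) ltnS leqn0 dist_sym dist_eq0.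
Qed.

Variable R : realType.

Definition one_lipschitz (f : T -> R) := forall u v, adj u v -> `|f u - f v| <= 1.

Lemma laplacianD (f g : T -> R) w :
  laplacian adj (fun v => f v + g v) w = laplacian adj f w + laplacian adj g w.
Proof. by rewrite /laplacian -big_split; apply: eq_bigr => v _ /=; ring. Qed.

Lemma laplacianN (f : T -> R) w : laplacian adj (fun v => - f v) w = - laplacian adj f w.
Proof. by rewrite /laplacian -sumrN; apply: eq_bigr => v _; ring. Qed.

Lemma laplacian_sum_nbrs (f : T -> R) w :
  f w = 0 -> laplacian adj f w = \sum_(v | adj w v) f v.
Proof. by move=> Hw; apply: eq_bigr => v _; rewrite Hw subr0. Qed.

Lemma sum_nbrs_indicator w (P : pred T) :
  \sum_(v | adj w v) (P v : nat)%:R = #|[set v | adj w v && P v]|%:R :> R.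
Proof.
by rewrite -sum1dep_card natr_sum big_mkcondr; apply: eq_bigr => v _; case: (P v).
Qed.

Lemma sum_laplacian_eq0 (f : T -> R) : \sum_w laplacian adj f w = 0.
Proof.
rewrite /laplacian; under eq_bigr do rewrite sumrB.
rewrite sumrB; apply/eqP; rewrite subr_eq0; apply/eqP.
under eq_bigr do rewrite big_mkcond.
rewrite exchange_big; apply: eq_bigr => v _.
by rewrite [RHS]big_mkcond; apply: eq_bigr => w _; rewrite adj_sym.
Qed.

Lemma laplacian_bound (f : T -> R) w : one_lipschitz f -> `|laplacian adj f w| <= #|T|%:R.
Proof.
move=> Hf; apply: le_trans (ler_norm_sum _ _ _) _.
rewrite -sum1_card natr_sum big_mkcond /=; apply: ler_sum => v _.
by case: ifP => // Hwv; rewrite distrC Hf.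
Qed.

Lemma ollivier_le_laplacian x y (f : T -> R) : adj x y -> one_lipschitz f ->
  f y - f x = 1 -> ollivier R adj x y <= laplacian adj f x - laplacian adj f y.
Proof.
move=> Hxy Hf Hfxy; apply: ge_inf; last by exists f => //; do !split => //;
  exists x, y; rewrite distrC Hfxy normr1.
exists (- (#|T|%:R *+ 2)) => _ [g [_ [Hg _]] <-].
move: (laplacian_bound x Hg) (laplacian_bound y Hg); rewrite !ler_norml.
by case/andP=> ? ? /andP[? ?]; lra.
Qed.

Lemma one_lipschitz_natr (g : T -> nat) :
  (forall u v, adj u v -> (g u <= (g v).+1)%N) -> one_lipschitz (fun v => (g v)%:R).
Proof.
move=> Hg u v Huv; have := Hg u v Huv; have := Hg v u; rewrite adj_sym Huv.
rewrite ler_norml -!(ler_nat R) -!natr1 => /(_ isT) Hvu Huv'.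
by apply/andP; split; lra.
Qed.

Variable K : R.
Hypothesis curvature_ge : forall u v, adj u v -> K <= ollivier R adj u v.

Definition dist_to z : T -> R := fun v => (dist adj v z)%:R.

Lemma one_lipschitz_dist_to z : one_lipschitz (dist_to z).
Proof. by apply: one_lipschitz_natr => u v; apply: dist_le_adjl. Qed.

Definition closer_ind a b : T -> R := fun v => ((dist adj v a < dist adj v b)%N : nat)%:R.

Lemma sum_closer_ind w a b :
  \sum_(v | adj w v) closer_ind a b v = #|nbrs_closer w a b|%:R.
Proof. exact: sum_nbrs_indicator. Qed.

Lemma laplacian_dist_to_diff x y w : adj x y -> (dist adj w x < dist adj w y)%N ->
  laplacian adj (fun v => dist_to x v - dist_to y v) w =
  (#|nbrs_closer w y x|.*2 + #|nbrs_equidist w x y|)%:R.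
Proof.
move=> Hxy Hw; have Hyx : adj y x by rewrite adj_sym.
rewrite natrD -muln2 natrM -sum_closer_ind -sum_nbrs_indicator mulr_suml -big_split.
apply: eq_bigr => v _ /=; rewrite /dist_to /closer_ind (dist_closer_succ Hxy Hw) -natr1.
have : (dist adj v x + 1 = dist adj v y + (dist adj v y < dist adj v x) * 2
         + (dist adj v x == dist adj v y))%N.
  by move: (dist_le_adjr v Hxy) (dist_le_adjr v Hyx); case: ltngtP; lia.
by move/(congr1 (fun n => n%:R : R)); rewrite !natrD natrM; lra.
Qed.

Lemma one_lipschitz_min x y : adj x y -> one_lipschitz (fun v => dist_to x v - closer_ind y x v).
Proof.
move=> Hxy; have -> : (fun v => dist_to x v - closer_ind y x v) =
                      (fun v => (minn (dist adj v x) (dist adj v y))%:R).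
  apply/funext => v; rewrite /dist_to /closer_ind.
  have : (minn (dist adj v x) (dist adj v y) + (dist adj v y < dist adj v x) = dist adj v x)%N.
    have Hyx : adj y x by rewrite adj_sym.
    by have := dist_le_adjr v Hyx; case: ltnP; lia.
  by move/(congr1 (fun n => n%:R : R)); rewrite natrD; lra.
apply: one_lipschitz_natr => a b Hab.
by have := dist_le_adjl x Hab; have := dist_le_adjl y Hab; lia.
Qed.

Lemma one_lipschitz_max x y : adj x y -> one_lipschitz (fun v => dist_to y v + closer_ind y x v).
Proof.
move=> Hxy; have -> : (fun v => dist_to y v + closer_ind y x v) =
                      (fun v => (maxn (dist adj v x) (dist adj v y))%:R).
  apply/funext => v; rewrite /dist_to /closer_ind -natrD; congr _%:R.
  have Hyx : adj y x by rewrite adj_sym.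
  by have := dist_le_adjr v Hxy; have := dist_le_adjr v Hyx; case: ltnP; lia.
apply: one_lipschitz_natr => a b Hab.
by have := dist_le_adjl x Hab; have := dist_le_adjl y Hab; lia.
Qed.

Lemma laplacian_dist_to_center z : laplacian adj (dist_to z) z = (deg adj z)%:R.
Proof.
rewrite /laplacian degE -sum1dep_card natr_sum; apply: eq_bigr => v Hzv.
by rewrite /dist_to distxx subr0 dist_sym dist_adj.
Qed.

Lemma laplacian_dist_to_le z w :
  laplacian adj (dist_to z) w <= (deg adj z)%:R - K * (dist adj w z)%:R.
Proof.
move Hk : (dist adj w z) => k; elim: k w Hk => [|k IH] w.
  move/eqP; rewrite dist_sym dist_eq0 => /eqP ->.
  by rewrite laplacian_dist_to_center mulr0 subr0.
move=> /[dup] Hw /dist_succ_nbr[u Hwu Hu].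
have Hf : one_lipschitz (fun v => - dist_to z v).
  by move=> a b Hab; rewrite -opprD normrN one_lipschitz_dist_to.
have Hfwu : - dist_to z u - - dist_to z w = 1 by rewrite /dist_to Hu Hw -natr1; ring.
have := le_trans (curvature_ge Hwu) (ollivier_le_laplacian Hwu Hf Hfwu).
by rewrite !laplacianN -natr1; have := IH u Hu; lra.
Qed.

Hypothesis K_gt0 : 0 < K.
Hypothesis diam_eff_sharp : diam_eff R adj = (max_deg adj)%:R / K.

Lemma laplacian_dist_to_sharp z w :
  laplacian adj (dist_to z) w = (max_deg adj)%:R - K * (dist adj w z)%:R.
Proof.
pose defect z w := (max_deg adj)%:R - K * (dist adj w z)%:R - laplacian adj (dist_to z) w.
have defect_ge0 z' w' : 0 <= defect z' w'.
  have := laplacian_dist_to_le z' w'; have : (deg adj z' <= max_deg adj)%N by apply: leq_bigmax.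
  by rewrite -(ler_nat R) /defect; lra.
have N2_gt0 : 0 < (#|T| ^ 2)%:R :> R.
  by rewrite ltr0n expn_gt0; apply/orP; left; apply/card_gt0P; exists z.
have total : \sum_z' \sum_w' defect z' w' = 0.
  under eq_bigr do rewrite !sumrB sum_laplacian_eq0 subr0 sumr_const -mulr_sumr.
  rewrite sumrB sumr_const -mulr_sumr exchange_big /=.
  move/eqP: diam_eff_sharp; rewrite /diam_eff eqr_div ?(gt_eqF K_gt0) ?(gt_eqF N2_gt0) // => /eqP.
  have cardT : #|[pred _ : T | true]| = #|T| by apply: eq_card.
  by rewrite mulr_natr -mulrnA cardT mulnn => <-; rewrite mulrC subrr.
have := psumr_eq0P (fun z' _ => sumr_ge0 _ (fun w' _ => defect_ge0 z' w')) total (i:=z) isT.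
move/(psumr_eq0P (fun w' _ => defect_ge0 z w')) => /(_ w isT).
by rewrite /defect; lra.
Qed.

Lemma card_nbrs_closer_equidist x y w : adj x y -> (dist adj w x < dist adj w y)%N ->
  (#|nbrs_closer w y x|.*2 + #|nbrs_equidist w x y|)%:R = K.
Proof.
move=> Hxy Hw; rewrite -laplacian_dist_to_diff // laplacianD laplacianN.
by rewrite !laplacian_dist_to_sharp (dist_closer_succ Hxy Hw) -natr1; ring.
Qed.

Lemma sum_nbrs_correction_le z u w (c : T -> R) :
  adj u w -> dist adj w z = (dist adj u z).+1 -> c u = 0 -> c w = 0 ->
  one_lipschitz (fun v => dist_to z v + c v) ->
  \sum_(v | adj w v) c v <= \sum_(v | adj u v) c v.
Proof.
move=> Huw Hd Hcu Hcw Hf.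
have Hfuw : dist_to z w + c w - (dist_to z u + c u) = 1.
  by rewrite Hcu Hcw /dist_to Hd -natr1; ring.
have := le_trans (curvature_ge Huw) (ollivier_le_laplacian Huw Hf Hfuw).
by rewrite !laplacianD !laplacian_dist_to_sharp !laplacian_sum_nbrs // Hd -natr1 mulrDr mulr1; lra.
Qed.

Lemma card_nbrs_closer_step x y u w : adj x y -> adj u w ->
  (dist adj u x < dist adj u y)%N -> (dist adj w x < dist adj w y)%N ->
  dist adj w x = (dist adj u x).+1 ->
  #|nbrs_closer w y x| = #|nbrs_closer u y x|.
Proof.
move=> Hxy Huw Hu Hw Hd.
have closer0 v : (dist adj v x < dist adj v y)%N -> closer_ind y x v = 0.
  by move=> Hv; rewrite /closer_ind ltnNge ltnW.
apply/eqP; rewrite eqn_leq -!(ler_nat R) -!sum_closer_ind; apply/andP; split.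
  apply: (sum_nbrs_correction_le Huw _ _ _ (one_lipschitz_max Hxy)); try exact: closer0.
  by rewrite (dist_closer_succ Hxy Hw) (dist_closer_succ Hxy Hu) Hd.
rewrite -lerN2 -!sumrN; apply: (sum_nbrs_correction_le Huw Hd _ _ (one_lipschitz_min Hxy));
  by rewrite closer0 ?oppr0.
Qed.

Lemma card_nbrs_closer_eq1 x y x' : adj x y -> (dist adj x' x < dist adj x' y)%N ->
  #|nbrs_closer x' y x| = 1%N.
Proof.
move=> Hxy Hx'; move Hk : (dist adj x' x) => k; elim: k x' Hk Hx' => [|k IH] x' Hk Hx'.
  by move/eqP: Hk; rewrite dist_sym dist_eq0 => /eqP ->; rewrite nbrs_closer_adj // cards1.
have [u Hx'u Hu] := dist_succ_nbr Hk; have Hux' : adj u x' by rewrite adj_sym.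
have Hu' : (dist adj u x < dist adj u y)%N.
  by have := dist_le_adjl y Hx'u; rewrite (dist_closer_succ Hxy Hx') Hk Hu; lia.
by rewrite (card_nbrs_closer_step Hxy Hux' Hu' Hx'); [apply: IH | rewrite Hk Hu].
Qed.

End Graph.

Theorem lemma3p4 (R : realType) (T : finType) (adj : rel T) (K : R)
  (Hsimple : simple_graph adj) (Hconn : connected_graph adj)
  (HKmin : (forall u v, adj u v -> K <= ollivier R adj u v) /\
           (exists u v, adj u v /\ ollivier R adj u v = K))
  (HKpos : 0 < K)
  (Hsharp : diam_eff R adj = (max_deg adj)%:R / K)
  (x y : T) (Hxy : adj x y) :
  forall x' : T, (dist adj x' x < dist adj x' y)%N ->
    #|[set v | adj x' v && (dist adj v y < dist adj v x)%N]| = 1%N /\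
    (#|[set v | adj x' v && (dist adj v x == dist adj v y)]|)%:R = K - 2.
Proof.
have [[adj_sym adj_irr] [curvature_ge _]] := (Hsimple, HKmin).
move=> x' Hx'.
have closer1 := card_nbrs_closer_eq1 adj_sym Hconn adj_irr curvature_ge HKpos Hsharp Hxy Hx'.
split=> //.
have := card_nbrs_closer_equidist adj_sym Hconn adj_irr curvature_ge HKpos Hsharp Hxy Hx'.
by rewrite closer1 -[1.*2]/2%N natrD /nbrs_equidist; lra.
Qed.
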